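(* Let $\alpha>0$, let $\mathscr{K}$ be a convex feasible functional, and consider the augmented dual ascent scheme $$x^{n+1} = \operatorname{arg\,min}_{x} \mathscr{K}(x)+\langle x,\Lambda^n\rangle +\frac{\alpha}{2}\|x\|^2,\qquad \Lambda^{n+1} = \Lambda^{n} + \alpha\mathcal{P}_{\mathcal{M}^\perp}(x^{n+1}),\qquad \Lambda^0=0.$$ Define $\mathscr{J}(x)=\mathscr{K}(x)+\frac{\alpha}{2}\|\mathcal{P}_{\mathcal{M}}x\|^2$ and $h:\mathcal{H}\to\mathbb{R}$ by $h(\Lambda)=\min_x \mathscr{J}(x)+\langle x,\mathcal{P}_{\mathcal{M}^\perp}\Lambda\rangle=-\mathscr{J}^*(-\mathcal{P}_{\mathcal{M}^\perp}\Lambda)$. If $h$ attains its supremum, then $(\Lambda^{n})_{n=1}^\infty$ is a bounded sequence. In particular, this happens if $\mathscr{K}$ is a feasible finite-valued functional.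
   Context: $\mathcal{H}$ is a finite dimensional Hilbert space, $\mathcal{M}\subset\mathcal{H}$ a linear subspace, $\mathcal{P}_{\mathcal{M}}$, $\mathcal{P}_{\mathcal{M}^\perp}$ the orthogonal projections onto $\mathcal{M}$, $\mathcal{M}^\perp$. $\mathscr{J}^*$ denotes the Fenchel conjugate. A functional is called feasible if it is lower semi-continuous, proper, bounded below, and satisfies $\lim_{\|x\|\rightarrow\infty}\mathscr{K}(x)/\|x\|=\infty$. *)

From HB Require Import structures.
From mathcomp Require Import all_boot all_order all_algebra.
From mathcomp Require Import all_classical all_reals all_analysis.
Set Implicit Arguments. Unset Strict Implicit. Unset Printing Implicit Defensive.
Import Order.TTheory GRing.Theory Num.Theory.
Import numFieldNormedType.Exports.
Local Open Scope classical_set_scope.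
Local Open Scope ring_scope.

Section Defs.
Variables (R : realType) (n : nat).
Local Notation H := 'rV[R]_n.

Definition dot (x y : H) : R := (x *m y^T) 0 0.
Definition hnorm (x : H) : R := Num.sqrt (dot x x).

Definition is_subspace (M : set H) : Prop :=
  M 0 /\ forall (a : R) (x y : H), M x -> M y -> M (a *: x + y).

Definition orth_compl (M : set H) : set H :=
  [set y | forall x, M x -> dot x y = 0].

Definition is_orth_proj (M : set H) (P : H -> H) : Prop :=
  forall x, M (P x) /\ forall z, M z -> dot (x - P x) z = 0.

Definition lsc (K : H -> \bar R) : Prop :=
  forall x (a : R), (a%:E < K x)%E -> \forall y \near x, (a%:E < K y)%E.
Definition proper_fun (K : H -> \bar R) : Prop :=
  (forall x, K x != -oo%E) /\ exists x, K x \is a fin_num.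
Definition bounded_below (K : H -> \bar R) : Prop :=
  exists m : R, forall x, (m%:E <= K x)%E.
Definition superlinear (K : H -> \bar R) : Prop :=
  forall m : R, exists r : R, forall x, r < hnorm x ->
    (m%:E < K x * (hnorm x)^-1%:E)%E.
Definition feasible (K : H -> \bar R) : Prop :=
  [/\ lsc K, proper_fun K, bounded_below K & superlinear K].
Definition convex_fun (K : H -> \bar R) : Prop :=
  forall (t : R) (x y : H), 0 < t < 1 ->
    (K (t *: x + (1 - t) *: y)%R <= t%:E * K x + (1 - t)%:E * K y)%E.
End Defs.

From HB Require Import structures.
From mathcomp Require Import all_boot all_order all_algebra.
From mathcomp Require Import all_classical all_reals all_analysis.
From mathcomp Require Import ring lra.
Import Order.TTheory GRing.Theory Num.Theory.
Import numFieldNormedType.Exports.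
Local Open Scope classical_set_scope.
Local Open Scope ring_scope.

(* Part 1.  Let [Lst] maximize [h] and [p := PMp Lst].  By strong convexity of
   the augmented Lagrangian, the primal step [x] taken at the multiplier [L] also
   minimizes [J + <., L + alpha PMp x>], so [h] at the updated multiplier is
   attained at [x]; comparing with [h Lst] gives [<x, L + alpha PMp x - p> <= 0],
   which makes every multiplier update a Fejer step towards [p].  Hence
   [|L_k| <= 2 |p|].
   Part 2.  The value function [w |-> inf_(m in M) J (w + m)] is a finite convex
   function, so it has a subgradient [g] at [0] (built one coordinate at a time
   by the one-dimensional Hahn-Banach extension step).  It is invariant under
   translations by [M], so [g] is orthogonal to [M], and then [h (- g)] bounds
   every [h L] from above. *)

Section InnerProduct.
Context {R : realType} {n : nat}.
Implicit Types (a t : R) (x y z : 'rV[R]_n).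

Lemma dotE x y : dot x y = \sum_i x 0 i * y 0 i.
Proof. by rewrite /dot !mxE; apply: eq_bigr => i _; rewrite mxE. Qed.

Lemma dotC x y : dot x y = dot y x.
Proof. by rewrite !dotE; apply: eq_bigr => i _; rewrite mulrC. Qed.

Lemma dotDl x y z : dot (x + y) z = dot x z + dot y z.
Proof. by rewrite !dotE -big_split; apply: eq_bigr => i _; rewrite mxE mulrDl. Qed.

Lemma dotZl a x y : dot (a *: x) y = a * dot x y.
Proof. by rewrite !dotE mulr_sumr; apply: eq_bigr => i _; rewrite mxE mulrA. Qed.

Lemma dotNl x y : dot (- x) y = - dot x y.
Proof. by rewrite -scaleN1r dotZl mulN1r. Qed.

Lemma dotBl x y z : dot (x - y) z = dot x z - dot y z.
Proof. by rewrite dotDl dotNl. Qed.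

Lemma dotDr x y z : dot x (y + z) = dot x y + dot x z.
Proof. by rewrite dotC dotDl !(dotC x). Qed.

Lemma dotZr a x y : dot x (a *: y) = a * dot x y.
Proof. by rewrite dotC dotZl dotC. Qed.

Lemma dotNr x y : dot x (- y) = - dot x y.
Proof. by rewrite dotC dotNl dotC. Qed.

Lemma dotBr x y z : dot x (y - z) = dot x y - dot x z.
Proof. by rewrite dotDr dotNr. Qed.

Lemma dot0r x : dot x 0 = 0.
Proof. by rewrite -(scale0r (0 : 'rV_n)) dotZr mul0r. Qed.

Lemma dotxx_ge0 x : 0 <= dot x x.
Proof. by rewrite dotE; apply: sumr_ge0 => i _; rewrite -expr2 sqr_ge0. Qed.

Lemma dotxx_eq0 x : dot x x = 0 -> x = 0.
Proof.
rewrite dotE => /eqP; rewrite psumr_eq0 => [/allP x0|i _]; last by rewrite -expr2 sqr_ge0.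
apply/rowP => i; rewrite mxE.
by have := x0 i (mem_index_enum i); rewrite -expr2 sqrf_eq0 => /eqP.
Qed.

Lemma dot_delta x (i : 'I_n) : dot x (delta_mx 0 i) = x 0 i.
Proof.
rewrite dotE (bigD1 i) //= [delta_mx 0 i 0 i]mxE !eqxx mulr1 big1 ?addr0 // => j /negPf ji.
by rewrite [delta_mx 0 i 0 j]mxE ji andbF mulr0.
Qed.

Lemma hnorm_sqr x : hnorm x ^+ 2 = dot x x.
Proof. by rewrite /hnorm sqr_sqrtr // dotxx_ge0. Qed.

Lemma dotxxD x y : dot (x + y) (x + y) = dot x x + dot y y + 2 * dot x y.
Proof. rewrite !dotDl !dotDr (dotC y x); ring. Qed.

Lemma dotxxB x y : dot (x - y) (x - y) = dot x x + dot y y - 2 * dot x y.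
Proof. rewrite !dotBl !dotBr (dotC y x); ring. Qed.

Lemma dotxx_conv t x y :
  dot (t *: x + (1 - t) *: y) (t *: x + (1 - t) *: y) =
  t * dot x x + (1 - t) * dot y y - t * (1 - t) * dot (x - y) (x - y).
Proof. rewrite !dotBl !dotBr !dotDl !dotDr !dotZl !dotZr (dotC y x); ring. Qed.

End InnerProduct.

Section Subspace.
Context {R : realType} {n : nat} {A : set 'rV[R]_n}.
Hypothesis subA : is_subspace A.

Lemma subspaceD {x y} : A x -> A y -> A (x + y).
Proof. by case: subA => _ lin Ax Ay; have := lin 1 x y Ax Ay; rewrite scale1r. Qed.

Lemma subspaceZ a {x} : A x -> A (a *: x).
Proof. by case: subA => A0 lin Ax; have := lin a x 0 Ax A0; rewrite addr0. Qed.

Lemma subspaceB {x y} : A x -> A y -> A (x - y).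
Proof. by move=> Ax Ay; rewrite -scaleN1r; apply: subspaceD => //; apply: subspaceZ. Qed.

End Subspace.

Lemma orth_compl_subspace {R : realType} {n : nat} (A : set 'rV[R]_n) :
  is_subspace (orth_compl A).
Proof.
split=> [x _|a x y Ax Ay z Az]; first by rewrite dot0r.
by rewrite dotDr dotZr Ax // Ay // mulr0 addr0.
Qed.

Lemma orth_self_eq0 {R : realType} {n : nat} {A : set 'rV[R]_n} {x} :
  A x -> (forall z, A z -> dot x z = 0) -> x = 0.
Proof. by move=> Ax /(_ x Ax) /dotxx_eq0. Qed.

Section OrthProj.
Context {R : realType} {n : nat} {A : set 'rV[R]_n} {P : 'rV[R]_n -> 'rV[R]_n}.
Hypotheses (subA : is_subspace A) (projP : is_orth_proj A P).
Implicit Types (x y z : 'rV[R]_n).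

Lemma orth_proj_mem x : A (P x).
Proof. by have [] := projP x. Qed.

Lemma dot_orth_proj x {z} : A z -> dot x z = dot (P x) z.
Proof. by move=> Az; apply/eqP; rewrite -subr_eq0 -dotBl (projP x).2. Qed.

Lemma orth_proj_id {y} : A y -> P y = y.
Proof.
move=> Ay; apply/eqP; rewrite eq_sym -subr_eq0; apply/eqP.
by apply: (orth_self_eq0 (subspaceB subA Ay (orth_proj_mem y))) => z /(projP y).2.
Qed.

Lemma orth_proj_linear a x y : P (a *: x + y) = a *: P x + P y.
Proof.
apply/eqP; rewrite -subr_eq0; apply/eqP; apply: (orth_self_eq0 (A := A)).
  apply: (subspaceB subA (orth_proj_mem _)).
  exact: (subspaceD subA (subspaceZ subA a (orth_proj_mem x)) (orth_proj_mem y)).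
move=> z Az; rewrite dotBl dotDl dotZl -!dot_orth_proj //.
by rewrite dotDl dotZl subrr.
Qed.

Lemma orth_projB x y : P (x - y) = P x - P y.
Proof. by rewrite addrC -scaleN1r orth_proj_linear scaleN1r addrC. Qed.

Lemma dotxx_sub_orth_proj x : dot (x - P x) (x - P x) = dot x x - dot (P x) (P x).
Proof.
have cross : dot (x - P x) (P x) = 0 by apply: (projP x).2; apply: orth_proj_mem.
by have := dotxxD (x - P x) (P x); rewrite subrK cross mulr0 addr0 => ->; rewrite addrK.
Qed.

Lemma dotxx_orth_proj x : dot (P x) (P x) <= dot x x.
Proof. by rewrite -subr_ge0 -dotxx_sub_orth_proj dotxx_ge0. Qed.

End OrthProj.

Lemma orth_proj_compl {R : realType} {n : nat} {M : set 'rV[R]_n} {PM PMp} :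
  is_orth_proj M PM -> is_orth_proj (orth_compl M) PMp -> forall x, PM x = x - PMp x.
Proof.
move=> projM projMp x; apply/eqP; rewrite -subr_eq0; apply/eqP.
apply: (orth_self_eq0 (A := orth_compl M)) => [|z Mp_z].
  have -> : PM x - (x - PMp x) = PMp x - (x - PM x) by rewrite !opprB addrCA.
  apply: (subspaceB (orth_compl_subspace M)); first exact: (projMp x).1.
  by move=> m Mm; rewrite dotC; apply: (projM x).2.
by rewrite dotBl (projMp x).2 // subr0; apply: Mp_z; apply: (projM x).1.
Qed.

Definition convex_rfun {R : realType} {n : nat} (f : 'rV[R]_n -> R) : Prop :=
  forall t x y, 0 < t < 1 -> f (t *: x + (1 - t) *: y) <= t * f x + (1 - t) * f y.

Section Subgradient.
Context {R : realType} {n : nat} {phi : 'rV[R]_n -> R}.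
Hypothesis phi_cvx : convex_rfun phi.
Implicit Types (s u : R) (a b w : 'rV[R]_n).

Lemma convex_rfun_weighted s u a b : 0 < s -> 0 < u ->
  (s + u) * phi ((s / (s + u)) *: a + (u / (s + u)) *: b) <= s * phi a + u * phi b.
Proof.
move=> s0 u0; have su0 : 0 < s + u by rewrite addr_gt0.
have t01 : 0 < s / (s + u) < 1 by rewrite divr_gt0 //= ltr_pdivrMr // mul1r ltrDl.
have -> : u / (s + u) = 1 - s / (s + u) by field; rewrite gt_eqF.
have -> : s * phi a + u * phi b
    = (s + u) * (s / (s + u) * phi a + (1 - s / (s + u)) * phi b).
  by field; rewrite gt_eqF.
exact: (ler_wpM2l (ltW su0) (phi_cvx _ a b t01)).
Qed.

Section Extension.
Variables (A : set 'rV[R]_n) (g e : 'rV[R]_n).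
Hypotheses (subA : is_subspace A) (g_subgrad : forall w, A w -> phi 0 + dot w g <= phi w).

(* Convexity along the segment from [w' - u e] to [w + s e], whose convex
   combination lands in [A], where [g] is a subgradient. *)
Lemma subgradient_slope_le w w' s u : A w -> A w' -> 0 < s -> 0 < u ->
  (phi 0 + dot w' g - phi (w' - u *: e)) / u <= (phi (w + s *: e) - phi 0 - dot w g) / s.
Proof.
move=> Aw Aw' s0 u0; have su0 : 0 < s + u by rewrite addr_gt0.
have cvx := @convex_rfun_weighted s u (w' - u *: e) (w + s *: e) s0 u0.
have comb : (s / (s + u)) *: (w' - u *: e) + (u / (s + u)) *: (w + s *: e)
    = (s / (s + u)) *: w' + (u / (s + u)) *: w.
  by apply/rowP => i; rewrite !mxE; field; rewrite gt_eqF.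
rewrite comb in cvx.
have Awc : A ((s / (s + u)) *: w' + (u / (s + u)) *: w).
  by apply: (subspaceD subA); apply: (subspaceZ subA).
have sub := ler_wpM2l (ltW su0) (g_subgrad _ Awc).
have lin : (s + u) * (phi 0 + dot ((s / (s + u)) *: w' + (u / (s + u)) *: w) g)
    = (s + u) * phi 0 + s * dot w' g + u * dot w g.
  by rewrite dotDl !dotZl; field; rewrite gt_eqF.
rewrite lin in sub.
rewrite ler_pdivrMr // mulrAC ler_pdivlMr //.
set pl := phi (w' - u *: e) in cvx *; set pr := phi (w + s *: e) in cvx *.
set pc := phi _ in cvx sub.
nra.
Qed.

Lemma subgradient_extend :
  exists c, forall w s, A w -> phi 0 + dot w g + s * c <= phi (w + s *: e).
Proof.
have A0 : A 0 by case: subA.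
pose slopes := [set (phi 0 + dot w' g - phi (w' - u *: e)) / u | w' in A & u in `]0, +oo[].
have slopes_ub : ubound slopes ((phi (0 + 1 *: e) - phi 0 - dot 0 g) / 1).
  by move=> _ [w' Aw' [u /= u0 <-]]; apply: subgradient_slope_le; rewrite // in_itv /= andbT in u0.
have slopes_sup : has_sup slopes.
  split; last by exists ((phi (0 + 1 *: e) - phi 0 - dot 0 g) / 1).
  exists ((phi 0 + dot 0 g - phi (0 - 1 *: e)) / 1); exists 0 => //.
  by exists 1 => //=; rewrite in_itv /= ltr01.
exists (sup slopes) => w s Aw.
have [s0|s0|->] := ltgtP s 0; last by rewrite mul0r addr0 scale0r addr0; apply: g_subgrad.
- have : (phi 0 + dot w g - phi (w - (- s) *: e)) / (- s) <= sup slopes.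
    apply: sup_upper_bound => //; exists w => //; exists (- s) => //=.
    by rewrite in_itv /= andbT oppr_gt0.
  by rewrite scaleNr opprK ler_pdivrMr ?oppr_gt0 //; lra.
- have : sup slopes <= (phi (w + s *: e) - phi 0 - dot w g) / s.
    apply: ge_sup => [|_ [w' Aw' [u /= u0 <-]]]; first exact: slopes_sup.1.
    by apply: subgradient_slope_le; rewrite // in_itv /= andbT in u0.
  by rewrite ler_pdivlMr //; lra.
Qed.

End Extension.

Lemma convex_subgradient0 : exists g, forall w, phi 0 + dot w g <= phi w.
Proof.
pose span_first k := [set w : 'rV[R]_n | forall i : 'I_n, (k <= i)%N -> w 0 i = 0].
suff /(_ n (leqnn n)) [g g_subgrad] : forall k, (k <= n)%N ->
    exists g, forall w, span_first k w -> phi 0 + dot w g <= phi w.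
  by exists g => w; apply: g_subgrad => i; rewrite leqNgt ltn_ord.
elim=> [_|k IH kn].
  exists 0 => w A0w; have -> : w = 0 by apply/rowP => i; rewrite mxE A0w.
  by rewrite dot0r addr0.
have [g g_subgrad] := IH (ltnW kn).
pose i0 : 'I_n := Ordinal kn; pose e : 'rV[R]_n := delta_mx 0 i0.
have subA : is_subspace (span_first k).
  split=> [i _|a x y Ax Ay i ki]; first by rewrite mxE.
  by rewrite !mxE Ax // Ay // mulr0 addr0.
have [c hc] := @subgradient_extend (span_first k) g e subA g_subgrad.
exists (g + (c - g 0 i0) *: e) => w Aw.
pose s := w 0 i0; pose w0 := w - s *: e.
have Aw0 : span_first k w0.
  move=> i ki; rewrite !mxE; have [->|ne] := eqVneq i i0; first by rewrite !eqxx mulr1 subrr.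
  rewrite Aw ?andbF ?mulr0 ?subrr // ltn_neqAle ki andbT.
  by apply: contra ne => /eqP ik; apply/eqP/val_inj.
have w_eq : w = w0 + s *: e by rewrite subrK.
have dot_w0e : dot w0 e = 0 by rewrite dot_delta !mxE !eqxx mulr1 subrr.
have dot_e : dot e e = 1 by rewrite dot_delta mxE !eqxx.
clearbody w0 s; rewrite w_eq.
rewrite !dotDl !dotDr !dotZl !dotZr dot_e dot_w0e (dotC e g) dot_delta.
apply: le_trans (hc _ s Aw0).
by rewrite mulr0 addr0 mulr1 -mulrDr subrKC addrA.
Qed.

End Subgradient.

Lemma ler_of_mul_subr {R : realFieldType} (c d : R) :
  (forall t, 0 < t < 1 -> c * (1 - t) <= d) -> c <= d.
Proof.
move=> cd; rewrite leNgt; apply/negP => dc.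
have half : c * (1 - 1 / 2) <= d by apply: cd; apply/andP; split; lra.
have c0 : 0 < c by lra.
pose t := (c - d) / (2 * c).
have t01 : 0 < t < 1.
  by rewrite divr_gt0 ?mulr_gt0 ?subr_gt0 //= ltr_pdivrMr ?mulr_gt0 //; lra.
have := cd t t01; have -> : c * (1 - t) = (c + d) / 2 by rewrite /t; field; rewrite gt_eqF.
lra.
Qed.

Lemma argmin_quadratic_growth {R : realType} {n : nat} {alpha : R}
    {K : 'rV[R]_n -> \bar R} {L x y : 'rV[R]_n} {kx ky : R} :
  convex_fun K -> (forall z, K z != -oo%E) -> K x = kx%:E -> K y = ky%:E ->
  (forall z, (K x + (dot x L + alpha / 2 * dot x x)%:E
              <= K z + (dot z L + alpha / 2 * dot z z)%:E)%E) ->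
  alpha / 2 * dot (y - x) (y - x)
    <= (ky + dot y L + alpha / 2 * dot y y) - (kx + dot x L + alpha / 2 * dot x x).
Proof.
move=> cvxK K_ninfty Kx Ky x_min; apply: ler_of_mul_subr => t /andP[t0 t1].
pose z := t *: y + (1 - t) *: x.
have Kz : (K z <= (t * ky + (1 - t) * kx)%:E)%E.
  by rewrite EFinD !EFinM -Ky -Kx; apply: cvxK; rewrite t0 t1.
have Kz_fin : K z \is a fin_num.
  by rewrite fin_numE K_ninfty lt_eqF // (le_lt_trans Kz) ?ltry.
have := x_min z; rewrite -(fineK Kz_fin) Kx -!EFinD lee_fin.
rewrite /z dotxx_conv (dotDl (t *: y)) !dotZl => z_min.
rewrite -(fineK Kz_fin) lee_fin in Kz.
rewrite -(ler_pM2l t0); lra.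
Qed.

Lemma subgradient0_orth {R : realType} {n : nat} {A : set 'rV[R]_n}
    {psi : 'rV[R]_n -> R} {g : 'rV[R]_n} :
  is_subspace A -> (forall m, A m -> psi m <= psi 0) ->
  (forall w, psi 0 + dot w g <= psi w) -> orth_compl A g.
Proof.
move=> subA psi_max g_sub m Am.
have A_m : A (- m) by rewrite -scaleN1r; apply: (subspaceZ subA).
have := g_sub m; have := g_sub (- m); have := psi_max _ Am; have := psi_max _ A_m.
rewrite dotNl; lra.
Qed.

Lemma convex_dotxx_orth_proj {R : realType} {n : nat} {A : set 'rV[R]_n}
    {P : 'rV[R]_n -> 'rV[R]_n} :
  is_subspace A -> is_orth_proj A P -> convex_rfun (fun x => dot (P x) (P x)).
Proof.
move=> subA projP t x y /andP[t0 t1].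
have P0 : P 0 = 0 by apply: (orth_proj_id subA projP); case: subA.
have PZ a z : P (a *: z) = a *: P z.
  by have := orth_proj_linear subA projP a z 0; rewrite !addr0 P0 addr0.
rewrite (orth_proj_linear subA projP) PZ dotxx_conv.
have t1' : 0 <= 1 - t by rewrite subr_ge0 ltW.
have := mulr_ge0 (mulr_ge0 (ltW t0) t1') (dotxx_ge0 (P x - P y)); lra.
Qed.

Section MarginalInf.
Context {R : realType} {n : nat} (f : 'rV[R]_n -> R) (A : set 'rV[R]_n).
Hypotheses (subA : is_subspace A) (f_lb : exists m0, forall x, m0 <= f x).
Implicit Types (m w : 'rV[R]_n).

Definition marginal_inf w : R := inf [set f (w + m) | m in A].

Lemma marginal_inf_le w {m} : A m -> marginal_inf w <= f (w + m).
Proof.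
move=> Am; apply: ge_inf; last by exists m.
by have [m0 f_ge] := f_lb; exists m0 => _ [m' _ <-].
Qed.

Lemma marginal_inf_ge w r : (forall m, A m -> r <= f (w + m)) -> r <= marginal_inf w.
Proof.
move=> r_le; apply: lb_le_inf => [|_ [m Am <-]]; last exact: r_le.
by exists (f (w + 0)); exists 0 => //; case: subA.
Qed.

Lemma ereal_le_marginal_inf (e : \bar R) w :
  (forall m, A m -> (e <= (f (w + m))%:E)%E) -> (e <= (marginal_inf w)%:E)%E.
Proof.
case: e => [r| |] e_le; last exact: leNye.
  by rewrite lee_fin; apply: marginal_inf_ge => m Am; rewrite -lee_fin e_le.
by have := e_le 0 subA.1; rewrite leye_eq.
Qed.

Lemma marginal_inf_shift_le w {m} : A m -> marginal_inf (w + m) <= marginal_inf w.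
Proof.
move=> Am; apply: marginal_inf_ge => m' Am'.
have -> : w + m' = w + m + (m' - m) by rewrite -addrA subrKC.
by apply: marginal_inf_le; apply: (subspaceB subA).
Qed.

Lemma marginal_inf_convex : convex_rfun f -> convex_rfun marginal_inf.
Proof.
move=> f_cvx t a b t01; have /andP[t0 t1] := t01; have t1' : 0 < 1 - t by rewrite subr_gt0.
set X := marginal_inf _.
have both m1 m2 : A m1 -> A m2 -> X <= t * f (a + m1) + (1 - t) * f (b + m2).
  move=> Am1 Am2.
  have Amc : A (t *: m1 + (1 - t) *: m2).
    by apply: (subspaceD subA); apply: (subspaceZ subA).
  apply: le_trans (marginal_inf_le _ Amc) _.
  rewrite addrACA -!scalerDr; exact: f_cvx.
have one_side m1 : A m1 -> X <= t * f (a + m1) + (1 - t) * marginal_inf b.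
  move=> Am1; rewrite -lerBlDl -ler_pdivrMl //; apply: marginal_inf_ge => m2 Am2.
  by rewrite ler_pdivrMl // lerBlDl; apply: both.
rewrite -lerBlDr -ler_pdivrMl //; apply: marginal_inf_ge => m1 Am1.
by rewrite ler_pdivrMl // lerBlDr; apply: one_side.
Qed.

End MarginalInf.

Lemma argmin_fin_num {R : realType} {n : nat} {K : 'rV[R]_n -> \bar R}
    {f : 'rV[R]_n -> R} {x} :
  proper_fun K -> (forall z, (K x + (f x)%:E <= K z + (f z)%:E)%E) -> K x \is a fin_num.
Proof.
move=> [K_ninfty [y Ky_fin]] x_min; rewrite fin_numE K_ninfty /=.
apply/negP => /eqP Kx_infty; have := x_min y.
by rewrite Kx_infty addye // -(fineK Ky_fin) -EFinD leNgt ltry.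
Qed.

Section DualAscent.
Context {R : realType} {n : nat} (M : set 'rV[R]_n) (PM PMp : 'rV[R]_n -> 'rV[R]_n).
Hypotheses (subM : is_subspace M) (projM : is_orth_proj M PM)
  (projMp : is_orth_proj (orth_compl M) PMp).
Variables (alpha : R) (K : 'rV[R]_n -> \bar R).
Hypotheses (alpha_gt0 : 0 < alpha) (cvxK : convex_fun K) (properK : proper_fun K).
Implicit Types (p x z L : 'rV[R]_n).

Let subMp : is_subspace (orth_compl M) := orth_compl_subspace M.
Let K_ninfty : forall x, K x != -oo%E := properK.1.

Definition aug_J x : \bar R := (K x + (alpha / 2 * hnorm (PM x) ^+ 2)%:E)%E.

Definition dual_h L : \bar R :=
  ereal_inf [set (aug_J x + (dot x (PMp L))%:E)%E | x in setT].

Lemma dual_h_le L z : (dual_h L <= aug_J z + (dot z (PMp L))%:E)%E.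
Proof. by apply: ereal_inf_le; exists (aug_J z + (dot z (PMp L))%:E)%E => //; exists z. Qed.

Lemma dual_h_argmin L x : orth_compl M L ->
    (forall z, (aug_J x + (dot x L)%:E <= aug_J z + (dot z L)%:E)%E) ->
  dual_h L = (aug_J x + (dot x L)%:E)%E.
Proof.
move=> ML x_min; rewrite /dual_h (orth_proj_id subMp projMp ML).
apply/le_anti/andP; split; first by rewrite -(orth_proj_id subMp projMp ML) dual_h_le.
by apply: le_ereal_inf_tmp => _ [z _ <-].
Qed.

Lemma dotxx_PM x : dot (PM x) (PM x) = dot x x - dot (PMp x) (PMp x).
Proof. by rewrite (orth_proj_compl projM projMp) (dotxx_sub_orth_proj projMp). Qed.

(* The quadratic growth [alpha/2 |z - x|^2] of the augmented Lagrangian around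
   [x] dominates the term [alpha/2 |PMp z - PMp x|^2] by which the two
   Lagrangians differ. *)
Lemma aug_J_argmin_shift L x : K x \is a fin_num ->
    (forall z, (K x + (dot x L + alpha / 2 * dot x x)%:E
                <= K z + (dot z L + alpha / 2 * dot z z)%:E)%E) ->
  forall z, (aug_J x + (dot x (L + alpha *: PMp x))%:E
             <= aug_J z + (dot z (L + alpha *: PMp x))%:E)%E.
Proof.
move=> Kx_fin x_min z; have PMp_x := orth_proj_mem projMp x.
case Kz : (K z) => [kz| |]; last by have := K_ninfty z; rewrite Kz.
  have growth := argmin_quadratic_growth cvxK K_ninfty (esym (fineK Kx_fin)) Kz x_min.
  have contract := dotxx_orth_proj projMp (z - x).
  rewrite (orth_projB subMp projMp) dotxxB in contract.
  rewrite /aug_J -(fineK Kx_fin) Kz !hnorm_sqr -!EFinD lee_fin !dotxx_PM !dotDr !dotZr.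
  rewrite (dot_orth_proj projMp z PMp_x) (dot_orth_proj projMp x PMp_x).
  have := ler_wpM2l (ltW alpha_gt0) contract; lra.
by rewrite /aug_J Kz !addye // leey.
Qed.

Lemma dual_step_fejer p L x : orth_compl M p -> orth_compl M L ->
    dot x (L + alpha *: PMp x) <= dot x p ->
  dot (L + alpha *: PMp x - p) (L + alpha *: PMp x - p) <= dot (L - p) (L - p).
Proof.
move=> Mp_p Mp_L dual_le; set L' := L + alpha *: PMp x.
have Mp_L' : orth_compl M L'.
  by apply: (subspaceD subMp Mp_L); apply: (subspaceZ subMp); apply: orth_proj_mem projMp x.
have ascent : 0 <= dot (PMp x) (p - L').
  by rewrite -(dot_orth_proj projMp x (subspaceB subMp Mp_p Mp_L')) dotBr subr_ge0.
have -> : L - p = (L' - p) - alpha *: PMp x by rewrite /L' addrAC addrK.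
have cross : dot (PMp x) (L' - p) = - dot (PMp x) (p - L') by rewrite -dotNr opprB.
rewrite [leRHS]dotxxB dotZl !dotZr (dotC _ (PMp x)) cross.
have a0 := ltW alpha_gt0; have := mulr_ge0 a0 ascent.
have := mulr_ge0 a0 (mulr_ge0 a0 (dotxx_ge0 (PMp x))); lra.
Qed.

Lemma dual_ascent_bounded :
    (exists Lst, forall L, (dual_h L <= dual_h Lst)%E) ->
  forall (x L : nat -> 'rV[R]_n), L 0%N = 0 ->
    (forall k y, (K (x k.+1) + (dot (x k.+1) (L k) + alpha / 2 * hnorm (x k.+1) ^+ 2)%:E
                  <= K y + (dot y (L k) + alpha / 2 * hnorm y ^+ 2)%:E)%E) ->
    (forall k, L k.+1 = L k + alpha *: PMp (x k.+1)) ->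
  exists B, forall k, hnorm (L k) <= B.
Proof.
move=> [Lst Lst_max] x L L0 x_min L_step; set p := PMp Lst.
have Mp_p : orth_compl M p := orth_proj_mem projMp Lst.
have Mp_L k : orth_compl M (L k).
  elim: k => [|k IH]; first by rewrite L0; case: subMp.
  rewrite L_step; apply: (subspaceD subMp IH).
  by apply: (subspaceZ subMp); apply: orth_proj_mem projMp _.
have fejer k : dot (L k.+1 - p) (L k.+1 - p) <= dot (L k - p) (L k - p).
  have xk_min z : (K (x k.+1) + (dot (x k.+1) (L k) + alpha / 2 * dot (x k.+1) (x k.+1))%:E
      <= K z + (dot z (L k) + alpha / 2 * dot z z)%:E)%E by rewrite -!hnorm_sqr.
  have Kx_fin := argmin_fin_num properK xk_min.
  have := Lst_max (L k.+1); rewrite (@dual_h_argmin _ (x k.+1) (Mp_L k.+1)); last first.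
    by rewrite L_step; apply: aug_J_argmin_shift.
  move=> /le_trans /(_ (dual_h_le Lst (x k.+1))).
  have Jx_fin : aug_J (x k.+1) \is a fin_num by rewrite fin_numD Kx_fin.
  rewrite -(fineK Jx_fin) -!EFinD lee_fin lerD2l L_step => dual_le.
  exact: dual_step_fejer.
have dist_le k : dot (L k - p) (L k - p) <= dot p p.
  elim: k => [|k IH]; first by rewrite L0 sub0r dotNl dotNr opprK.
  exact: le_trans (fejer k) IH.
exists (Num.sqrt (4 * dot p p)) => k; rewrite /hnorm; apply: ler_wsqrtr.
have polar := dotxx_ge0 (L k - p - p); rewrite dotxxB in polar.
have := dotxxD (L k - p) p; rewrite subrK => ->.
have := dist_le k; lra.
Qed.

Lemma dual_h_attains_max : bounded_below K -> (forall x, K x \is a fin_num) ->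
  exists Lst, forall L, (dual_h L <= dual_h Lst)%E.
Proof.
move=> [m0 K_ge] K_fin; have a0 : 0 <= alpha / 2 by rewrite divr_ge0 // ltW.
pose jj x := fine (K x) + alpha / 2 * dot (PM x) (PM x).
have J_jj x : aug_J x = (jj x)%:E by rewrite /aug_J -(fineK (K_fin x)) hnorm_sqr.
have jj_lb : exists m0, forall x, m0 <= jj x.
  exists m0 => x; have := K_ge x; rewrite -(fineK (K_fin x)) lee_fin.
  have := mulr_ge0 a0 (dotxx_ge0 (PM x)); rewrite /jj; lra.
have jj_cvx : convex_rfun jj.
  move=> t a b t01; have := cvxK t a b t01.
  rewrite -[K a](fineK (K_fin a)) -[K b](fineK (K_fin b)) -[K (_ + _)](fineK (K_fin _)).
  rewrite -!EFinM -EFinD lee_fin => Kc.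
  have := ler_wpM2l a0 (convex_dotxx_orth_proj subM projM t a b t01); rewrite /jj; lra.
pose phi := marginal_inf jj M.
have [g g_sub] := convex_subgradient0 (marginal_inf_convex jj M subM jj_lb jj_cvx).
have g_orth : orth_compl M g.
  apply: (subgradient0_orth subM _ g_sub) => m Mm.
  by have := marginal_inf_shift_le jj M subM jj_lb 0 Mm; rewrite add0r.
have Mp_g : orth_compl M (- g) by move=> m Mm; rewrite dotNr g_orth // oppr0.
exists (- g) => L; apply: (@le_trans _ _ (phi 0)%:E).
  apply: (ereal_le_marginal_inf jj M subM) => m Mm.
  by have := dual_h_le L m; rewrite add0r J_jj (orth_proj_mem projMp L m Mm) addr0.
rewrite /dual_h (orth_proj_id subMp projMp Mp_g); apply: le_ereal_inf_tmp => _ [z _ <-].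
rewrite J_jj -EFinD lee_fin dotNr.
have := g_sub z; have := marginal_inf_le jj M jj_lb z subM.1; rewrite addr0; lra.
Qed.

End DualAscent.

Theorem corollary1 (R : realType) (n : nat) (M : set 'rV[R]_n)
  (PM PMp : 'rV[R]_n -> 'rV[R]_n) (alpha : R) (K : 'rV[R]_n -> \bar R) :
  is_subspace M ->
  is_orth_proj M PM ->
  is_orth_proj (orth_compl M) PMp ->
  0 < alpha ->
  convex_fun K -> feasible K ->
  let J := fun x => (K x + (alpha / 2 * hnorm (PM x) ^+ 2)%:E)%E in
  let h := fun L => ereal_inf [set (J x + (dot x (PMp L))%:E)%E | x in setT] in
  (* part 1: if h attains its supremum, the dual iterates are bounded *)
  ((exists Lst, forall L, (h L <= h Lst)%E) ->
   forall (x L : nat -> 'rV[R]_n),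
     L 0%N = 0 ->
     (forall k y, (K (x k.+1) + (dot (x k.+1) (L k) + alpha / 2 * hnorm (x k.+1) ^+ 2)%:E
                   <= K y + (dot y (L k) + alpha / 2 * hnorm y ^+ 2)%:E)%E) ->
     (forall k, L k.+1 = L k + alpha *: PMp (x k.+1)) ->
     exists B : R, forall k, (1 <= k)%N -> hnorm (L k) <= B)
  /\
  (* part 2: for finite-valued (feasible) K, h attains its supremum *)
  ((forall x, K x \is a fin_num) -> exists Lst, forall L, (h L <= h Lst)%E).
Proof.
move=> subM projM projMp alpha_gt0 cvxK [_ properK K_lb _] J h; split.
  move=> h_max x L L0 x_min L_step.
  have [B L_le] := dual_ascent_bounded _ _ _ projM projMp _ _ alpha_gt0 cvxK properK h_max
    _ _ L0 x_min L_step.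
  by exists B => k _.
exact: dual_h_attains_max _ _ _ subM projM projMp _ _ alpha_gt0 cvxK K_lb.
Qed.
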